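(* Let $X$ be a compact connected metric space with infinitely many points, let $\psi\colon X\to X$ be a minimal homeomorphism, and let $S$ be an infinite set of positive integers. Then for every $\varepsilon>0$ there exist $n\in S$, an $\varepsilon$-dense set $\{x_1,\dots,x_n\}\subset X$ of $n$ distinct points, and a permutation $s$ of $\{1,2,\dots,n\}$ such that $${\rm dist}(x_j,\psi(x_{s(j)}))<\varepsilon,\qquad j=1,2,\dots,n.$$
   Context: A homeomorphism is minimal if $X$ has no closed invariant subsets other than $\emptyset$ and $X$. *)

From HB Require Import structures.
From mathcomp Require Import all_boot all_order all_algebra.
From mathcomp Require Import all_classical all_reals all_analysis.
From mathcomp Require Import fingroup perm.
Set Implicit Arguments. Unset Strict Implicit. Unset Printing Implicit Defensive.
Import Order.TTheory GRing.Theory Num.Theory.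
Local Open Scope classical_set_scope.
Local Open Scope ring_scope.

Definition homeomorphism (T : topologicalType) (f : T -> T) : Prop :=
  exists g : T -> T,
    [/\ cancel f g, cancel g f, continuous f & continuous g].

Definition invariant_set (T : Type) (f : T -> T) (A : set T) : Prop :=
  f @` A = A.

Definition minimal_homeo (T : topologicalType) (f : T -> T) : Prop :=
  homeomorphism f /\
  forall A : set T, closed A -> invariant_set f A -> A = set0 \/ A = setT.

From HB Require Import structures.
From mathcomp Require Import all_boot all_order all_algebra.
From mathcomp Require Import all_classical all_reals all_analysis.
From mathcomp Require Import fingroup perm.
From mathcomp Require Import lra zify.
Import Order.TTheory GRing.Theory Num.Theory.
Local Open Scope classical_set_scope.
Local Open Scope ring_scope.

Set Implicit Arguments.
Unset Strict Implicit.
Unset Printing Implicit Defensive.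

(* Call an e-chain of length k a sequence p_0, ..., p_k with
   dist(psi p_i, p_(i+1)) < e.  By minimality every point is e-chain-reachable
   from every other one, and the set of points reachable from z at a time k
   whose class modulo "differences of return times of z" is fixed is clopen;
   by connectedness z returns at two consecutive times, hence at all large
   times.  A long closed e-chain through a dense orbit segment of z therefore
   exists in every large length n in S.  Since X is connected and infinite it
   has no isolated points, so its points can be moved slightly to be pairwise
   distinct, and the cyclic shift is the required permutation. *)

Section MetricFacts.
Variables (R : realType) (X : metricType R).
Implicit Types (x y : X) (r : R).

Lemma continuous_mdist (f : X -> X) : continuous f -> forall x e, 0 < e ->
  exists2 r, 0 < r & forall y, mdist x y < r -> mdist (f x) (f y) < e.
Proof.
move=> fc x e e0.
have := fc x => /metricType_numDomainType.cvgrPdist_lt /(_ e e0).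
rewrite -metricType_numDomainType.filter_from_mdist_nbhs => -[r r0 H].
by exists r => // y /H.
Qed.

Lemma continuous_radius (f : X -> X) e : continuous f -> 0 < e ->
  exists rad : X -> R, forall x, [/\ 0 < rad x, rad x <= e &
    forall y, mdist x y < rad x -> mdist (f x) (f y) < e].
Proof.
move=> fc e0.
suff /choice[rad Hrad] : forall x, exists r, [/\ 0 < r, r <= e &
    forall y, mdist x y < r -> mdist (f x) (f y) < e] by exists rad.
move=> x; have [r r0 Hr] := continuous_mdist fc x e0.
exists (Num.min r e); split; first by rewrite lt_min r0 e0.
  by rewrite ge_min lexx orbT.
by move=> y xy; apply: Hr; apply: lt_le_trans xy _; rewrite ge_min lexx.
Qed.

Lemma open_mdist (A : set X) :
  (forall x, A x -> exists2 r, 0 < r & forall y, mdist x y < r -> A y) -> open A.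
Proof.
move=> H; rewrite openE => x /H [r r0 Hr].
rewrite /interior -metricType_numDomainType.filter_from_mdist_nbhs.
by exists r.
Qed.

Lemma compact_cluster_seq : compact [set: X] -> forall u : nat -> X,
  exists y, forall N r, 0 < r -> exists2 k, (N <= k)%N & mdist y (u k) < r.
Proof.
move=> cX u.
have PF : ProperFilter (u @ \oo) := fmap_proper_filter u eventually_filter.
have [y [_ cy]] := cX _ PF filterT.
exists y => N r r0.
have [w [[k /= Nk <-] Hw]] := cy (u @` [set k | (N <= k)%N]) (ball y r)
  (ltac:(by exists N => // k /= Nk; exists k)) (nbhsx_ballx y r r0).
by exists k => //; move: Hw; rewrite ballEmdist.
Qed.

Hypotheses (conX : connected [set: X]) (infX : infinite_set [set: X]).

Lemma connected_infinite_nonisolated x r : 0 < r ->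
  exists y, y != x /\ mdist x y < r.
Proof.
move=> r0; apply: contrapT => isolated.
have ballx : forall y, mdist x y < r -> y = x.
  by move=> y xy; apply: contrapT => /eqP yx; apply: isolated; exists y.
have openx : open [set x] by apply: open_mdist => _ -> ; exists r => // y /ballx.
have closedx : closed [set x].
  exact/accessible_closed_set1/hausdorff_accessible/metric_hausdorff.
have x_full : [set x] = [set: X].
  by apply: conX; [exists x | exists [set x]; rewrite ?setTI..].
by apply: infX; rewrite -x_full; exact: finite_set1.
Qed.

Lemma near_notin_seq x (s : seq X) r : 0 < r ->
  exists y, [/\ y != x, y \notin s & mdist x y < r].
Proof.
elim: s r => [|a s IH] r r0.
  by have [y [yx xy]] := connected_infinite_nonisolated x r0; exists y.
have [->|ax] := eqVneq a x.
  have [y [yx ys xy]] := IH r r0.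
  by exists y; split => //; rewrite inE negb_or ys andbT.
have r'0 : 0 < Num.min r (mdist x a) by rewrite lt_min r0 mdist_gt0 eq_sym ax.
have [y [yx ys xy]] := IH _ r'0.
move: xy; rewrite lt_min => /andP[xy xya].
exists y; split => //; rewrite inE negb_or ys andbT.
by apply: contraTneq xya => ->; rewrite ltxx.
Qed.

Lemma injective_approx (p : nat -> X) (r : nat -> R) : (forall i, 0 < r i) ->
  forall n, exists f : nat -> X,
    (forall i, (i < n)%N -> mdist (p i) (f i) < r i) /\ {in gtn n &, injective f}.
Proof.
move=> r0; elim=> [|n [f [fp finj]]]; first by exists p.
have [q [_ qf pq]] := near_notin_seq (p n) [seq f i | i <- iota 0 n] (r0 n).
have fq i : (i < n)%N -> f i != q.
  by move=> ilt; apply: contraNneq qf => <-; apply: map_f; rewrite mem_iota.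
exists (fun i => if i == n then q else f i); split.
  by move=> i; rewrite ltnS leq_eqVlt; case: eqP => [-> _|_ /fp].
move=> i j; rewrite !inE /= !ltnS (leq_eqVlt i) (leq_eqVlt j).
case: eqP => [->|_] /= iin; case: eqP => [->|_] /= jin //.
- by move=> /esym/eqP; rewrite (negPf (fq j jin)).
- by move=> /eqP; rewrite (negPf (fq i iin)).
- exact: finj.
Qed.

End MetricFacts.

Lemma closed_path_ord_pred (T : Type) (p : nat -> T) n : p n = p 0%N ->
  forall j : 'I_n, p j = p (ord_pred j).+1.
Proof.
move=> pn0 j; rewrite -[in LHS](ord_predK j) /=.
have := ltn_ord (ord_pred j); rewrite leq_eqVlt => /orP[/eqP ->|lt].
  by rewrite modnn pn0.
by rewrite modn_small.
Qed.

Section MinimalDynamics.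
Variables (R : realType) (X : metricType R) (psi : X -> X).
Implicit Types (x y z : X) (r : R).

Definition omega_limit x : set X :=
  [set y | forall N r, 0 < r ->
     exists2 k, (N <= k)%N & mdist y (iter k psi x) < r].

Lemma omega_limit_closed x : closed (omega_limit x).
Proof.
move=> y; rewrite closureEnbhs => ycl N r r0.
have r2 : 0 < r / 2 by rewrite divr_gt0.
have [w [wx yw]] := ycl _ (ball y (r / 2)) (fun _ h => h) (nbhsx_ballx y _ r2).
have [k Nk wk] := wx N _ r2; exists k => //.
move: yw; rewrite ballEmdist /= => yw.
apply: le_lt_trans (metric_triangle _ w _) _.
by rewrite (splitr r) ltrD.
Qed.

Lemma omega_limit_invariant x :
  homeomorphism psi -> invariant_set psi (omega_limit x).
Proof.
move=> [g [psiK gK cpsi cg]]; apply/seteqP; split.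
  move=> _ [y xy <-] N r r0.
  have [r' r'0 Hr'] := continuous_mdist cpsi y r0.
  have [k Nk yk] := xy N r' r'0.
  by exists k.+1; [exact: leqW | rewrite iterS; exact: Hr'].
move=> y xy; exists (g y); last exact: gK.
move=> N r r0.
have [r' r'0 Hr'] := continuous_mdist cg y r0.
have [k Nk yk] := xy N.+1 r' r'0.
exists k.-1; first by rewrite -ltnS (ltn_predK Nk).
by have := Hr' _ yk; rewrite -(ltn_predK Nk) iterS psiK.
Qed.

Hypotheses (cX : compact [set: X]) (mpsi : minimal_homeo psi).

Lemma omega_limitT x : omega_limit x = [set: X].
Proof.
case: mpsi => hpsi minpsi.
have [|//] := minpsi _ (@omega_limit_closed x) (@omega_limit_invariant x hpsi).
have [y yx] := compact_cluster_seq cX (fun k => iter k psi x).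
by move=> omega0; suff : omega_limit x y by rewrite omega0.
Qed.

Lemma orbit_segment_dense z r : 0 < r ->
  exists M, forall y, exists2 i, (i <= M)%N & mdist y (iter i psi z) < r.
Proof.
move=> r0; apply/not_existsP => unbounded.
have /choice[u far] : forall M, exists y,
    ~ exists2 i, (i <= M)%N & mdist y (iter i psi z) < r.
  by move=> M; apply/existsNP/unbounded.
have [y yu] := compact_cluster_seq cX u.
have r2 : 0 < r / 2 by rewrite divr_gt0.
have /(_ 0%N _ r2)[k _ yk] : omega_limit z y by rewrite omega_limitT.
have [M kM yuM] := yu k _ r2.
apply: (far M); exists k => //.
apply: le_lt_trans (metric_triangle _ y _) _.
by rewrite (splitr r) ltrD // metric_sym.
Qed.

End MinimalDynamics.

Section Chains.
Variables (R : realType) (X : metricType R) (psi : X -> X) (e : R).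
Implicit Types (x y z : X) (p q : nat -> X).

Definition is_chain p k := forall i, (i < k)%N -> mdist (psi (p i)) (p i.+1) < e.

Definition chain x k y := exists p, [/\ p 0%N = x, p k = y & is_chain p k].

Definition path_cat p q a i := if (i <= a)%N then p i else q (i - a)%N.

Lemma path_cat_end p q a b : p a = q 0%N -> path_cat p q a (a + b) = q b.
Proof.
move=> pq; rewrite /path_cat; case: leqP => [ab|_]; last by rewrite addKn.
have -> : b = 0%N by lia.
by rewrite addn0.
Qed.

Lemma is_chain_cat p q a b : p a = q 0%N ->
  is_chain p a -> is_chain q b -> is_chain (path_cat p q a) (a + b).
Proof.
move=> pq pch qch i iab; rewrite /path_cat.
case: (ltngtP i a) => [ia|ai|ia]; last subst i.
- exact: pch.
- by rewrite subSn ?(ltnW ai) //; apply: qch; lia.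
- by rewrite subSn // subnn pq; apply: qch; lia.
Qed.

Lemma chain_cat x y w a b : chain x a y -> chain y b w -> chain x (a + b) w.
Proof.
move=> [p [p0 pa pch]] [q [q0 qb qch]]; exists (path_cat p q a); split.
- by rewrite /path_cat leq0n.
- by rewrite path_cat_end ?pa.
- by apply: is_chain_cat; rewrite ?pa.
Qed.

Lemma chain0 x : chain x 0 x.
Proof. by exists (fun=> x). Qed.

Lemma chain_mul z c m : chain z c z -> chain z (m * c) z.
Proof.
move=> zc; elim: m => [|m IH]; first exact: chain0.
by rewrite mulSn; exact: (chain_cat zc IH).
Qed.

Lemma chain_open x y k : (0 < k)%N -> chain x k y ->
  exists2 r, 0 < r & forall y', mdist y y' < r -> chain x k y'.
Proof.
move=> k0 [p [p0 pk pch]].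
have := pch k.-1; rewrite ltn_predL (ltn_predK k0) pk => /(_ k0) last_step.
exists (e - mdist (psi (p k.-1)) y); first by rewrite subr_gt0.
move=> y' yy'; exists (fun i => if i == k then y' else p i); split.
- by case: eqP k0 => // <-.
- by rewrite eqxx.
- move=> i ik; rewrite (ltn_eqF ik); case: eqP => [ik1|_]; last exact: pch.
  have -> : i = k.-1 by rewrite -ik1.
  apply: le_lt_trans (metric_triangle _ y _) _.
  by rewrite -ltrBrDl.
Qed.

Lemma chain_return_large z b : chain z b z -> chain z b.+1 z ->
  exists B, forall m, chain z (B + m) z.
Proof.
move=> zb zb1.
have zc : chain z (b + b.+1) z by exact: (chain_cat zb zb1).
have zc1 : chain z (b + b.+1).+1 z by rewrite -addSn; exact: (chain_cat zb1 zb1).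
set c := (b + b.+1)%N in zc zc1.
exists (c * c)%N => m; elim/ltn_ind: m => m IH.
have [mc|cm] := ltnP m c.
  have -> : (c * c + m = (c - m) * c + m * c.+1)%N by nia.
  exact: (chain_cat (chain_mul _ zc) (chain_mul _ zc1)).
have -> : (c * c + m = (c * c + (m - c)) + c)%N by lia.
apply: chain_cat (IH _ _) zc; rewrite /c in cm *; lia.
Qed.

Lemma is_chain_orbit x k : 0 < e -> is_chain (fun i => iter i psi x) k.
Proof. by move=> e0 i _; rewrite iterS mdistxx. Qed.

Lemma chain_orbit x k : 0 < e -> chain x k (iter k psi x).
Proof.
by move=> e0; exists (fun i => iter i psi x); split; last exact: is_chain_orbit.
Qed.

End Chains.

Section ChainsOfMinimalHomeomorphisms.
Variables (R : realType) (X : metricType R) (psi : X -> X).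
Hypotheses (cX : compact [set: X]) (mpsi : minimal_homeo psi).
Variables (e : R) (e_gt0 : 0 < e).
Implicit Types (x y z : X).

Local Notation chain := (chain psi e).

Lemma chain_reach x y : exists2 k, (0 < k)%N & chain x k y.
Proof.
have : omega_limit psi x y by rewrite omega_limitT.
move=> /(_ 1%N _ e_gt0)[k k1 yk]; exists k => //.
exists (fun i => if i == k then y else iter i psi x); split.
- by case: eqP k1 => // <-.
- by rewrite eqxx.
- move=> i ik; rewrite (ltn_eqF ik).
  case: eqP => [ik1|_]; first by rewrite metric_sym -iterS ik1.
  exact: is_chain_orbit.
Qed.

Definition return_gap z k :=
  exists a b, [/\ chain z a z, chain z b z & (k + b)%N = a].

Lemma return_gap_transfer z y k k' :
  return_gap z k -> chain z k y -> chain z k' y -> return_gap z k'.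
Proof.
move=> [a [b [za zb kb]]] zky zk'y.
have [c _ yc] := chain_reach y z.
exists (k' + c + a)%N, (k + c + b)%N; split.
- exact: (chain_cat (chain_cat zk'y yc) za).
- exact: (chain_cat (chain_cat zky yc) zb).
- lia.
Qed.

Lemma open_chain_reach z (P : nat -> Prop) :
  open [set y | exists k, [/\ (0 < k)%N, chain z k y & P k]].
Proof.
apply: open_mdist => y [k [k0 zky Pk]].
have [r r0 near_y] := chain_open k0 zky.
by exists r => // w /near_y zkw; exists k.
Qed.

Hypothesis conX : connected [set: X].

Lemma chain_return_consecutive z : exists b, chain z b z /\ chain z b.+1 z.
Proof.
pose V := [set y | exists k, [/\ (0 < k)%N, chain z k y & return_gap z k]].
suff VT : V = setT.
  have [k [_ zk gap]] : V (psi z) by rewrite VT.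
  have [a [b [za zb ab]]] := return_gap_transfer gap zk (chain_orbit psi z 1 e_gt0).
  by exists b; rewrite -add1n ab.
apply: conX.
- have [k k0 zkz] := chain_reach z z.
  exists z, k; split => //; exists (k + k)%N, k; split => //.
  exact: (chain_cat zkz zkz).
- by exists V; [exact: open_chain_reach | rewrite setTI].
- pose W := [set y | exists k, [/\ (0 < k)%N, chain z k y & ~ return_gap z k]].
  exists (~` W); first exact/open_closedC/open_chain_reach.
  rewrite setTI; apply/seteqP; split => y.
    move=> [k [_ zky gap]] [k' [_ zk'y]]; apply.
    exact: (return_gap_transfer gap zky zk'y).
  move=> notW; have [k k0 zky] := chain_reach z y.
  by have [gap|nogap] := pselect (return_gap z k); [|case: notW]; exists k.
Qed.

Lemma closed_chain_dense z : exists N, forall n, (N <= n)%N ->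
  exists p : nat -> X, [/\ p n = p 0%N, is_chain psi e p n &
    forall y, exists2 i, (i < n)%N & mdist y (p i) < e].
Proof.
have [M segM] := orbit_segment_dense cX mpsi z e_gt0.
have [c c0 back] := chain_reach (iter M psi z) z.
have [b [zb zb1]] := chain_return_consecutive z.
have [B loops] := chain_return_large zb zb1.
exists (M + c + B)%N => n Nn.
have [q [q0 qend qch]] := chain_cat back (loops (n - (M + c + B))%N).
have n_split : n = (M + (c + (B + (n - (M + c + B)))))%N by lia.
exists (path_cat (fun i => iter i psi z) q M); split.
- by rewrite n_split path_cat_end ?q0 // qend.
- by rewrite n_split; apply: is_chain_cat; rewrite ?q0 //; exact: is_chain_orbit.
- move=> y; have [i iM yi] := segM y.
  by exists i; [lia | rewrite /path_cat iM].
Qed.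

End ChainsOfMinimalHomeomorphisms.

Theorem lemma4p4 (R : realType) (X : metricType R) (psi : X -> X) (S : set nat) :
  compact [set: X] -> connected [set: X] -> infinite_set [set: X] ->
  minimal_homeo psi ->
  infinite_set S -> (forall n, S n -> (0 < n)%N) ->
  forall eps : R, 0 < eps ->
  exists n : nat, exists x : 'I_n -> X, exists s : {perm 'I_n},
    [/\ S n, injective x,
        (forall y : X, exists i : 'I_n, mdist y (x i) < eps) &
        (forall j : 'I_n, mdist (x j) (psi (x (s j))) < eps)].
Proof.
move=> cX conX infX mpsi infS _ eps eps0.
have cpsi : continuous psi by case: mpsi => -[g [_ _ ? _]].
have [z _] := infinite_setN0 infX.
have eps2 : 0 < eps / 2 by rewrite divr_gt0.
have eps8 : 0 < eps / 8 by rewrite divr_gt0.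
have [N chains] := closed_chain_dense cX mpsi eps2 conX z.
have [n [Sn /negP]] := infinite_setN0 (infinite_setD infS (finite_II N)).
rewrite -leqNgt => Nn.
have [p [pn0 pch pdense]] := chains n Nn.
have [rad radP] := continuous_radius cpsi eps8.
have rad_gt0 x : 0 < rad x by case: (radP x).
have [f [pf finj]] := injective_approx conX infX p (fun i => rad_gt0 (p i)) n.
exists n, (fun i : 'I_n => f i), (perm (@ord_pred_inj n)); split => //.
- by move=> i j fij; apply: val_inj; apply: finj fij; exact: ltn_ord.
- move=> y; have [i ilt yi] := pdense y; exists (Ordinal ilt) => /=.
  have [_ rad8 _] := radP (p i); have := pf i ilt.
  have := metric_triangle y (p i) (f i); lra.
- move=> j; rewrite permE; set i := ord_pred j.
  have [_ radj _] := radP (p j); have [_ _ cont_i] := radP (p i).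
  have fj := pf j (ltn_ord j); rewrite metric_sym in fj.
  have fi := cont_i _ (pf i (ltn_ord i)).
  have step := pch i (ltn_ord i).
  rewrite -(closed_path_ord_pred pn0 j) metric_sym in step.
  have := metric_triangle (f j) (p j) (psi (f i)).
  have := metric_triangle (p j) (psi (p i)) (psi (f i)).
  lra.
Qed.
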